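(* Let $G=(V,E)$ be a cograph and let $\sigma:V\to S$ be an hc-coloring of $G$. Then $|S|=\chi(G)$.
   Context: All graphs are finite, simple and undirected. A (proper vertex) coloring of $G=(V,E)$ is a surjective map $\sigma:V\to S$ such that $xy\in E$ implies $\sigma(x)\neq\sigma(y)$; $\chi(G)$ is the chromatic number. A cograph is a graph that is $K_1$, or a disjoint union of cographs, or a join of cographs. A cotree $(T,t)$ of a cograph $G$ is a rooted tree $T$ whose leaf set is $V$, together with a labeling $t:V^0(T)\to\{0,1\}$ of its inner vertices, such that for every inner vertex $u$ the induced subgraph $G(u):=G[L(T(u))]$ (where $L(T(u))$ is the set of leaves descending from $u$) is the disjoint union (if $t(u)=0$) or the join (if $t(u)=1$) of the graphs $G(v)$, $v$ a child of $u$. The cotree is binary if every inner vertex has exactly two children. A coloring $\sigma$ of $G$ is an hc-coloring with respect to a binary cotree $(T,t)$ if for every inner vertex $u$ of $T$ with children $v_1,v_2$: if $t(u)=1$ then $\sigma(L(T(v_1)))\cap\sigma(L(T(v_2)))=\emptyset$, and if $t(u)=0$ then $\sigma(L(T(v_1)))\cap\sigma(L(T(v_2)))\in\{\sigma(L(T(v_1))),\sigma(L(T(v_2)))\}$ (i.e., one of the two color sets contains the other). A coloring $\sigma$ of a cograph $G$ is an hc-coloring of $G$ if there exists a binary cotree $(T,t)$ of $G$ such that $\sigma$ is an hc-coloring with respect to $(T,t)$. *)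

From mathcomp Require Import all_boot.
Set Implicit Arguments. Unset Strict Implicit. Unset Printing Implicit Defensive.

Section Graphs.
Variable T : finType.

(* A finite simple undirected graph on vertex set T is a symmetric
   irreflexive relation e : rel T (hypotheses stated in the theorem). *)

Definition proper_coloring (S : Type) (e : rel T) (sigma : T -> S) : Prop :=
  forall x y, e x y -> sigma x <> sigma y.

Definition surjective_map (S : Type) (sigma : T -> S) : Prop :=
  forall c : S, exists x, sigma x = c.

Definition colorable (e : rel T) (n : nat) : bool :=
  [exists f : {ffun T -> 'I_n}, [forall x, forall y, e x y ==> (f x != f y)]].

Lemma colorable_card (e : rel T) : irreflexive e -> exists n, colorable e n.
Proof.
move=> irr; exists #|T|; apply/existsP; exists [ffun x => enum_rank x].
apply/forallP=> x; apply/forallP=> y; apply/implyP=> exy; rewrite !ffunE.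
apply/negP=> /eqP/enum_rank_inj exy'; by rewrite exy' irr in exy.
Qed.

Definition chi (e : rel T) (irr : irreflexive e) : nat :=
  ex_minn (colorable_card irr).

(* Cographs: K_1, or disjoint union, or join of cographs (binary form; the
   n-ary union/join is an iteration of the binary one), stated for induced
   subgraphs G[A]. *)
Inductive cograph_on (e : rel T) : {set T} -> Prop :=
| cograph_K1 x : cograph_on e [set x]
| cograph_union A B : cograph_on e A -> cograph_on e B -> [disjoint A & B] ->
    (forall x y, x \in A -> y \in B -> ~~ e x y) -> cograph_on e (A :|: B)
| cograph_join A B : cograph_on e A -> cograph_on e B -> [disjoint A & B] ->
    (forall x y, x \in A -> y \in B -> e x y) -> cograph_on e (A :|: B).

Definition cograph (e : rel T) : Prop := cograph_on e [set: T].

(* Binary rooted trees with leaves labelled by vertices and inner vertices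
   labelled by t(u) : bool (false = 0 = disjoint union, true = 1 = join). *)
Inductive btree : Type :=
| Leaf of T
| Node of bool & btree & btree.

Fixpoint leaves (t : btree) : seq T :=
  match t with
  | Leaf x => [:: x]
  | Node _ l r => leaves l ++ leaves r
  end.

Fixpoint cotree_labels_ok (e : rel T) (t : btree) : bool :=
  match t with
  | Leaf _ => true
  | Node b l r =>
      [&& cotree_labels_ok e l, cotree_labels_ok e r &
          all (fun x => all (fun y => e x y == b) (leaves r)) (leaves l)]
  end.

Definition binary_cotree (e : rel T) (t : btree) : Prop :=
  [/\ uniq (leaves t), (forall x, x \in leaves t) & cotree_labels_ok e t].

Definition colset (S : finType) (sigma : T -> S) (t : btree) : {set S} :=
  sigma @: [set x | x \in leaves t].

Fixpoint hc_wrt (S : finType) (sigma : T -> S) (t : btree) : bool :=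
  match t with
  | Leaf _ => true
  | Node b l r =>
      [&& hc_wrt sigma l, hc_wrt sigma r &
          if b then [disjoint colset sigma l & colset sigma r]
          else (colset sigma l :&: colset sigma r == colset sigma l)
               || (colset sigma l :&: colset sigma r == colset sigma r)]
  end.

Definition hc_coloring (S : finType) (e : rel T) (sigma : T -> S) : Prop :=
  [/\ proper_coloring e sigma, surjective_map sigma &
      exists t, binary_cotree e t /\ hc_wrt sigma t].

End Graphs.

From mathcomp Require Import all_boot.
Set Implicit Arguments. Unset Strict Implicit. Unset Printing Implicit Defensive.

(* An hc-coloring uses a clique's worth of colors.  Along the cotree, a join
   node has disjoint color sets on its two sides and complete adjacency between
   them, so cliques realizing the color counts of the two sides merge into a
   clique realizing the sum; at a union node one color set contains the other,
   so the clique of the larger side suffices.  Hence #|S| <= omega(G) <= chi(G),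
   while sigma itself is a proper coloring with #|S| colors, so chi(G) <= #|S|. *)

Section Cliques.
Variables (T : finType) (e : rel T).

Definition clique (K : {set T}) : Prop := {in K &, forall x y, x != y -> e x y}.

Lemma clique1 x : clique [set x].
Proof. by move=> y z /set1P-> /set1P->; rewrite eqxx. Qed.

Lemma cliqueU (A B : {set T}) :
  symmetric e -> clique A -> clique B -> {in A & B, forall x y, e x y} ->
  clique (A :|: B).
Proof.
move=> e_sym cliqueA cliqueB eAB x y.
case/setUP=> [xA|xB] /setUP[yA|yB]; first exact: cliqueA.
- by move=> _; apply: eAB.
- by move=> _; rewrite e_sym; apply: eAB.
- exact: cliqueB.
Qed.

Lemma clique_card_le (S : finType) (sigma : T -> S) (K : {set T}) :
  proper_coloring e sigma -> clique K -> #|K| <= #|S|.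
Proof.
move=> proper cliqueK; rewrite -(@card_in_imset _ _ sigma) ?max_card //.
move=> x y xK yK sxy; apply/eqP/negPn/negP.
by move/(cliqueK x y xK yK)/proper/(_ sxy).
Qed.

Lemma colorable_proper (n : nat) :
  colorable e n -> exists sigma : T -> 'I_n, proper_coloring e sigma.
Proof.
case/existsP=> f /forallP col; exists f => x y exy.
by apply/eqP; move/forallP/(_ y)/implyP/(_ exy): (col x).
Qed.

Lemma proper_colorable (S : finType) (sigma : T -> S) :
  proper_coloring e sigma -> colorable e #|S|.
Proof.
move=> proper; apply/existsP; exists [ffun x => enum_rank (sigma x)].
apply/forallP=> x; apply/forallP=> y; apply/implyP=> exy; rewrite !ffunE.
by apply/negP=> /eqP/enum_rank_inj; apply: proper.
Qed.

Lemma chi_le_card (e_irr : irreflexive e) (S : finType) (sigma : T -> S) :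
  proper_coloring e sigma -> chi e_irr <= #|S|.
Proof.
move=> proper; rewrite /chi; case: ex_minnP => m _; apply.
exact: proper_colorable proper.
Qed.

Lemma clique_card_le_chi (e_irr : irreflexive e) (K : {set T}) :
  clique K -> #|K| <= chi e_irr.
Proof.
move=> cliqueK; rewrite /chi; case: ex_minnP => m /colorable_proper[f proper] _.
by rewrite -[m]card_ord; apply: clique_card_le proper cliqueK.
Qed.

End Cliques.

Section HcColoring.
Variables (T : finType) (e : rel T) (S : finType) (sigma : T -> S).
Hypotheses (e_sym : symmetric e) (e_irr : irreflexive e).

Lemma colset_leaf x : colset sigma (Leaf x) = [set sigma x].
Proof.
rewrite /colset -imset_set1.
have -> : [set y | y \in leaves (Leaf x)] = [set x] by apply/setP=> y; rewrite !inE.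
by [].
Qed.

Lemma colset_node b l r :
  colset sigma (Node b l r) = colset sigma l :|: colset sigma r.
Proof.
rewrite /colset -imsetU.
have -> : [set x | x \in leaves (Node b l r)] =
          [set x | x \in leaves l] :|: [set x | x \in leaves r].
  by apply/setP=> x; rewrite !inE mem_cat.
by [].
Qed.

Lemma hc_colset_le_clique t :
  cotree_labels_ok e t -> hc_wrt sigma t ->
  exists K : {set T},
    [/\ {subset K <= leaves t}, clique e K & #|colset sigma t| <= #|K|].
Proof.
elim: t => [x | b l IHl r IHr] /=.
  move=> _ _; exists [set x]; split; last by rewrite colset_leaf !cards1.
  - by move=> y /set1P->; rewrite inE.
  - exact: clique1.
case/and3P=> okl okr /allP labels /and3P[hcl hcr hcb].
have [Kl [sKl cliqueKl leKl]] := IHl okl hcl.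
have [Kr [sKr cliqueKr leKr]] := IHr okr hcr.
rewrite colset_node; case: b labels hcb => labels hcb.
- have eKlr : {in Kl & Kr, forall x y, e x y}.
    by move=> x y /sKl xl /sKr yr; apply/eqP; move/allP/(_ y yr): (labels x xl).
  have disjK : Kl :&: Kr = set0.
    apply/setP=> x; rewrite !inE; apply/negbTE/andP=> -[xl xr].
    by move: (eKlr x x xl xr); rewrite e_irr.
  exists (Kl :|: Kr); split.
  + by move=> x /setUP[/sKl | /sKr]; rewrite mem_cat => ->; rewrite ?orbT.
  + exact: cliqueU.
  + rewrite [#|Kl :|: Kr|]cardsU disjK cards0 subn0.
    exact: leq_trans (leq_card_setU _ _) (leq_add leKl leKr).
- case/orP: hcb => [/eqP/setIidPl sub | /eqP/setIidPr sub].
  + exists Kr; split=> //; first by move=> x /sKr; rewrite mem_cat orbC => ->.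
    by rewrite (setUidPr sub).
  + exists Kl; split=> //; first by move=> x /sKl; rewrite mem_cat => ->.
    by rewrite (setUidPl sub).
Qed.

End HcColoring.

Theorem theorem3 (T : finType) (e : rel T) (e_sym : symmetric e)
  (e_irr : irreflexive e) (S : finType) (sigma : T -> S) :
  cograph e -> hc_coloring e sigma -> #|S| = chi e_irr.
Proof.
move=> _ [proper surj [t [[_ all_leaves labels_ok] hc]]].
have [K [_ cliqueK leK]] := hc_colset_le_clique e_sym e_irr labels_ok hc.
have colset_full : colset sigma t = [set: S].
  apply/setP=> c; rewrite inE; have [x <-] := surj c.
  by rewrite /colset imset_f // inE.
apply/eqP; rewrite eqn_leq (chi_le_card _ proper) andbT.
by rewrite -cardsT -colset_full (leq_trans leK) ?clique_card_le_chi.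
Qed.
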